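(* Let $(\Omega(\mathcal{A}),d)$ be a differential calculus on a complex algebra $\mathcal{A}$ with $\mathcal{E}=\Omega^1(\mathcal{A})$ a finitely generated projective right $\mathcal{A}$-module satisfying: (1) $\mathcal{E}=\mathcal{Z}(\mathcal{E})\otimes_{\mathcal{Z}(\mathcal{A})}\mathcal{A}$; (2) $\mathcal{E}\otimes_{\mathcal{A}}\mathcal{E}=\ker(\wedge)\oplus\mathcal{F}$ with $Q=\wedge|_{\mathcal{F}}:\mathcal{F}\to\Omega^2(\mathcal{A})$ a right $\mathcal{A}$-linear isomorphism; (3) $\sigma(\omega\otimes_{\mathcal{A}}\eta)=\eta\otimes_{\mathcal{A}}\omega$ for all $\omega,\eta\in\mathcal{Z}(\mathcal{E})$. Let $\nabla_1$ be a connection on $\mathcal{E}$. Then $\nabla_1$ is a bimodule connection for the pair $(\mathcal{E},\sigma)$ if and only if $\nabla_1(\mathcal{Z}(\mathcal{E}))\subseteq\mathcal{Z}(\mathcal{E}\otimes_{\mathcal{A}}\mathcal{E})$.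
   Context: A differential calculus: $\Omega(\mathcal{A})=\oplus_{j\ge0}\Omega^j(\mathcal{A})$, $\Omega^0=\mathcal{A}$, bimodules $\Omega^j$, an $\mathcal{A}$-bimodule product $\wedge$ adding degrees, $d$ of degree one with $d^2=0$ and the graded Leibniz rule, $\Omega^j$ right-spanned by $da_0\wedge\cdots\wedge da_{j-1}$. $\wedge:\mathcal{E}\otimes_{\mathcal{A}}\mathcal{E}\to\Omega^2(\mathcal{A})$ is the induced product; $\mathcal{F}$ is a right submodule; $P_{\rm sym}$ is the idempotent with image $\ker\wedge$ and kernel $\mathcal{F}$; $\sigma=2P_{\rm sym}-1$. $\mathcal{Z}(\mathcal{M})=\{m:am=ma\ \forall a\in\mathcal{A}\}$. Condition (1) means the multiplication map $\mathcal{Z}(\mathcal{E})\otimes_{\mathcal{Z}(\mathcal{A})}\mathcal{A}\to\mathcal{E}$ is an isomorphism. A connection is a $\mathbb{C}$-linear $\nabla:\mathcal{E}\to\mathcal{E}\otimes_{\mathcal{A}}\mathcal{E}$ with $\nabla(\omega a)=\nabla(\omega)a+\omega\otimes_{\mathcal{A}}da$. It is a bimodule connection for $(\mathcal{E},\sigma)$ if moreover $\nabla(ae)=a\nabla(e)+\sigma(da\otimes_{\mathcal{A}}e)$ for all $a\in\mathcal{A}$, $e\in\mathcal{E}$. *)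

From HB Require Import structures.
From mathcomp Require Import all_boot all_algebra.
From mathcomp Require Import complex Rstruct.
Set Implicit Arguments.
Unset Strict Implicit.
Unset Printing Implicit Defensive.
Import GRing.Theory.
Local Open Scope ring_scope.

Notation CC := (complex Rdefinitions.R).

Section Bimodules.
Variables (K : fieldType) (A : algType K).

Record bimod := Bimod {
  bcar :> lmodType K;
  lact : A -> bcar -> bcar;
  ract : bcar -> A -> bcar;
  _ : forall a m n, lact a (m + n) = lact a m + lact a n;
  _ : forall a b m, lact (a + b) m = lact a m + lact b m;
  _ : forall m, lact 1 m = m;
  _ : forall a b m, lact (a * b) m = lact a (lact b m);
  _ : forall m n a, ract (m + n) a = ract m a + ract n a;
  _ : forall m a b, ract m (a + b) = ract m a + ract m b;
  _ : forall m, ract m 1 = m;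
  _ : forall m a b, ract m (a * b) = ract (ract m a) b;
  _ : forall a m b, lact a (ract m b) = ract (lact a m) b;
  _ : forall (k : K) a m, lact (k *: a) m = k *: lact a m;
  _ : forall (k : K) a m, lact a (k *: m) = k *: lact a m;
  _ : forall (k : K) m a, ract m (k *: a) = k *: ract m a;
  _ : forall (k : K) m a, ract (k *: m) a = k *: ract m a
}.

Definition addmap (U V : zmodType) (f : U -> V) := forall x y, f (x + y) = f x + f y.

Definition bcentral (M : bimod) (m : M) := forall a : A, lact a m = ract m a.
Definition acentral (c : A) := forall a : A, a * c = c * a.

Definition rlinear (M N : bimod) (f : M -> N) :=
  addmap f /\ forall m a, f (ract m a) = ract (f m) a.

Definition balanced (M N : bimod) (G : zmodType) (f : M -> N -> G) :=
  [/\ forall m1 m2 n, f (m1 + m2) n = f m1 n + f m2 n,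
      forall m n1 n2, f m (n1 + n2) = f m n1 + f m n2 &
      forall m a n, f (ract m a) n = f m (lact a n)].

(* (T, t) is the tensor product M (x)_A N, as an A-bimodule:
   universal property for balanced maps, and the bimodule structure of T
   is the induced one. *)
Definition is_tensor (M N T : bimod) (t : M -> N -> T) :=
  [/\ balanced t,
      forall (G : zmodType) (f : M -> N -> G), balanced f ->
        exists g : T -> G, [/\ addmap g, forall m n, g (t m n) = f m n &
          forall g' : T -> G, addmap g' -> (forall m n, g' (t m n) = f m n) ->
            forall x, g' x = g x],
      forall a m n, lact a (t m n) = t (lact a m) n &
      forall m n b, ract (t m n) b = t m (ract n b)].

(* Condition (1): the multiplication map Z(E) (x)_{Z(A)} A -> E is an
   isomorphism.  (TZ, tz) is the tensor product of the right Z(A)-module Z(E)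
   and the left Z(A)-module A over the commutative ring Z(A); mu is the
   induced multiplication map, required to be bijective. *)
Definition zbalanced (E : bimod) (G : zmodType) (f : E -> A -> G) :=
  [/\ forall z1 z2 a, bcentral z1 -> bcentral z2 -> f (z1 + z2) a = f z1 a + f z2 a,
      forall z a b, bcentral z -> f z (a + b) = f z a + f z b &
      forall z c a, bcentral z -> acentral c -> f (ract z c) a = f z (c * a)].

Definition cond1 (E : bimod) :=
  exists (TZ : zmodType) (tz : E -> A -> TZ) (mu : TZ -> E),
  [/\ zbalanced tz,
      forall (G : zmodType) (f : E -> A -> G), zbalanced f ->
        exists g : TZ -> G, [/\ addmap g,
          forall z a, bcentral z -> g (tz z a) = f z a &
          forall g' : TZ -> G, addmap g' ->
            (forall z a, bcentral z -> g' (tz z a) = f z a) -> forall x, g' x = g x],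
      addmap mu, forall z a, bcentral z -> mu (tz z a) = ract z a &
      bijective mu].

(* E is a finitely generated projective right A-module: a direct summand of
   A^n, i.e. E -> A^n -> E composes to the identity (right A-linear maps). *)
Definition fg_projective (E : bimod) :=
  exists (n : nat) (es : 'I_n -> E) (phi : 'I_n -> E -> A),
    (forall i, addmap (phi i) /\ forall e a, phi i (ract e a) = phi i e * a) /\
    forall e, e = \sum_(i < n) ract (es i) (phi i e).

(* A differential calculus, in degrees 0,1,2 (Omega^0 = A, Omega^1 = E,
   Omega^2 = Om2): d : A -> E, d1 : E -> Om2, wedge : E x E -> Om2
   (products with degree 0 are the bimodule actions). *)
Definition diff_calc (E Om2 : bimod) (d : A -> E) (d1 : E -> Om2)
    (wedge : E -> E -> Om2) :=
  [/\ [/\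
      (forall (k : K) a b, d (k *: a + b) = k *: d a + d b),
      (forall (k : K) w v, d1 (k *: w + v) = k *: d1 w + d1 v) &
      (forall a, d1 (d a) = 0)],
      [/\ (forall a b, d (a * b) = ract (d a) b + lact a (d b)),
      (forall a w, d1 (lact a w) = wedge (d a) w + lact a (d1 w)) &
      (forall w a, d1 (ract w a) = ract (d1 w) a - wedge w (d a))],
      [/\ forall w1 w2 v, wedge (w1 + w2) v = wedge w1 v + wedge w2 v,
          forall w v1 v2, wedge w (v1 + v2) = wedge w v1 + wedge w v2,
          forall w a v, wedge (ract w a) v = wedge w (lact a v),
          forall a w v, lact a (wedge w v) = wedge (lact a w) v &
          forall w v a, ract (wedge w v) a = wedge w (ract v a)],
      (forall w : E, exists n (a b : 'I_n -> A),
          w = \sum_(i < n) ract (d (a i)) (b i)) &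
      (forall th : Om2, exists n (a0 a1 b : 'I_n -> A),
          th = \sum_(i < n) ract (wedge (d (a0 i)) (d (a1 i))) (b i))].

Definition sigma_of (T : bimod) (P : T -> T) (t : T) : T := P t *+ 2 - t.

Definition connection (E T : bimod) (tens : E -> E -> T) (d : A -> E)
    (nabla : E -> T) :=
  [/\ forall (k : K) e f, nabla (k *: e + f) = k *: nabla e + nabla f &
      forall w a, nabla (ract w a) = ract (nabla w) a + tens w (d a)].

Definition bimodule_connection (E T : bimod) (tens : E -> E -> T) (d : A -> E)
    (sigma : T -> T) (nabla : E -> T) :=
  forall a e, nabla (lact a e) = lact a (nabla e) + sigma (tens (d a) e).

End Bimodules.

From HB Require Import structures.
From mathcomp Require Import all_boot all_algebra.
From mathcomp Require Import complex Rstruct.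
Set Implicit Arguments.
Unset Strict Implicit.
Unset Printing Implicit Defensive.
Import GRing.Theory.
Local Open Scope ring_scope.

(** By condition (1), E is additively generated by the products [z a] with [z]
    central, so two additive maps on E that agree on these products agree
    everywhere.  As sigma is right A-linear and is the flip on central tensors
    (condition (3)), it is the flip on every [w (x) e] with [e] central.
    Comparing the two Leibniz rules for [nabla (a e) = nabla (e a)], [e] central,
    gives the forward implication; conversely, both sides of the left Leibniz
    rule are additive in [e] and agree on the products [z b].  Only conditions
    (1) and (3) and the right linearity of [P] are needed. *)

Section AddMap.
Variables (U V : zmodType) (f : U -> V).
Hypothesis f_add : addmap f.

Lemma addmap0 : f 0 = 0.
Proof. by apply: (addrI (f 0)); rewrite -f_add !addr0. Qed.

Lemma addmapN x : f (- x) = - f x.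
Proof. by apply: (addrI (f x)); rewrite -f_add !subrr addmap0. Qed.

Lemma addmapB x y : f (x - y) = f x - f y.
Proof. by rewrite f_add addmapN. Qed.

Lemma addmapMn x n : f (x *+ n) = f x *+ n.
Proof. by elim: n => [|n IH]; rewrite ?addmap0 // !mulrS f_add IH. Qed.

End AddMap.

Lemma addmap_sub (U V : zmodType) (f g : U -> V) :
  addmap f -> addmap g -> addmap (fun x => f x - g x).
Proof. by move=> fD gD x y; rewrite fD gD opprD addrACA. Qed.

Section BimoduleTheory.
Variables (K : fieldType) (A : algType K).

Lemma lactDr (M : bimod A) a (m n : M) : lact a (m + n) = lact a m + lact a n.
Proof. by case: M m n => /= ? ? ? H *; apply: H. Qed.

Lemma ractDl (M : bimod A) (m n : M) a : ract (m + n) a = ract m a + ract n a.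
Proof. by case: M m n => /= ? ? ? ? ? ? ? H *; apply: H. Qed.

Lemma lact_ract (M : bimod A) a (m : M) b : lact a (ract m b) = ract (lact a m) b.
Proof. by case: M m => /= ? ? ? ? ? ? ? ? ? ? ? H *; apply: H. Qed.

Lemma sigma_of_rlinear (T : bimod A) (P : T -> T) :
  rlinear P -> rlinear (sigma_of P).
Proof.
case=> PD Pr; split=> [x y | x a]; rewrite /sigma_of.
  by rewrite PD mulrnDl opprD addrACA.
have ract_add : addmap (fun t : T => ract t a) by move=> ? ?; apply: ractDl.
by rewrite (addmapB ract_add) (addmapMn ract_add) Pr.
Qed.

Lemma cond1_addmap_eq (E : bimod A) (G : zmodType) (h1 h2 : E -> G) :
  cond1 E -> addmap h1 -> addmap h2 ->
  (forall z a, bcentral z -> h1 (ract z a) = h2 (ract z a)) ->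
  forall e, h1 e = h2 e.
Proof.
case=> TZ [tz [mu [_ univ mu_add mu_tz [mu' _ mu'K]]]] h1D h2D h12 e.
pose h x := h1 x - h2 x.
have hD : addmap h by exact: addmap_sub.
have [|g [_ _ g_uniq]] := univ G (fun _ _ => 0).
  by split=> *; rewrite ?addr0.
(* [h \o mu] and [0] both factor the zero balanced map, so they coincide. *)
have h_mu x : h (mu x) = 0.
  rewrite -[h (mu x)]/((h \o mu) x) (g_uniq (h \o mu)) -?(g_uniq (fun=> 0)) //.
  - by move=> *; rewrite addr0.
  - by move=> y y' /=; rewrite mu_add hD.
  - by move=> z a zc /=; rewrite (mu_tz _ _ zc) /h /= (h12 _ _ zc); exact: subrr.
by apply: subr0_eq; rewrite -[e]mu'K; apply: h_mu.
Qed.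

End BimoduleTheory.

Section BimoduleConnection.
Variables (K : fieldType) (A : algType K) (E T : bimod A).
Variables (tens : E -> E -> T) (d : A -> E) (P : T -> T) (nabla : E -> T).
Hypotheses (E_cond1 : cond1 E) (tensP : is_tensor tens) (P_rlin : rlinear P).
Hypothesis sigma_flip : forall w v, bcentral w -> bcentral v ->
  sigma_of P (tens w v) = tens v w.
Hypothesis nablaP : connection tens d nabla.

Local Notation sigma := (sigma_of P).

Lemma sigma_tens_central w e : bcentral e -> sigma (tens w e) = tens e w.
Proof.
case: tensP => [[tDl tDr tract] _ _ tract2] ec.
have [sD sr] := sigma_of_rlinear P_rlin.
apply: (cond1_addmap_eq (h1 := fun w => sigma (tens w e)) (h2 := tens e)) => //.
- by move=> x y; rewrite tDl sD.
- by move=> z a zc; rewrite tract ec -tract2 sr sigma_flip // tract2.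
Qed.

Lemma nablaD : addmap nabla.
Proof. by case: nablaP => nablaK _ x y; have := nablaK 1 x y; rewrite !scale1r. Qed.

Lemma bimodule_connection_central :
  bimodule_connection tens d sigma nabla ->
  forall e, bcentral e -> bcentral (nabla e).
Proof.
move=> nabla_l e ec a; case: nablaP => _ nabla_r.
apply: (addIr (tens e (d a))).
by rewrite -nabla_r -ec nabla_l sigma_tens_central.
Qed.

Lemma central_bimodule_connection :
  (forall e, bcentral e -> bcentral (nabla e)) ->
  bimodule_connection tens d sigma nabla.
Proof.
move=> nabla_c a; case: nablaP => _ nabla_r.
case: tensP => [[_ tDr _] _ tlact tract2].
have [sD sr] := sigma_of_rlinear P_rlin.
have on_central z : bcentral z ->
    nabla (lact a z) = lact a (nabla z) + sigma (tens (d a) z).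
  by move=> zc; rewrite zc nabla_r nabla_c // sigma_tens_central.
apply: cond1_addmap_eq => //.
- by move=> x y; rewrite lactDr nablaD.
- by move=> x y; rewrite nablaD lactDr tDr sD addrACA.
move=> z b zc.
rewrite lact_ract nabla_r on_central // nabla_r lactDr lact_ract tlact.
by rewrite -tract2 sr ractDl addrAC.
Qed.

End BimoduleConnection.

Theorem proposition7p2
  (A : algType CC)
  (E Om2 : bimod A) (d : A -> E) (d1 : E -> Om2) (wedge : E -> E -> Om2)
  (Hcalc : diff_calc d d1 wedge)
  (Hfgp : fg_projective E)
  (T : bimod A) (tens : E -> E -> T) (Htens : is_tensor tens)
  (wedgeT : T -> Om2) (HwT_add : addmap wedgeT)
  (HwT : forall e f, wedgeT (tens e f) = wedge e f)
  (F : T -> Prop)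
  (HF : [/\ F 0, forall x y, F x -> F y -> F (x + y) &
            forall x a, F x -> F (ract x a)])
  (H1 : cond1 E)
  (H2sum : forall t, exists k f, [/\ wedgeT k = 0, F f & t = k + f])
  (H2dir : forall t, wedgeT t = 0 -> F t -> t = 0)
  (H2Q : [/\ forall f a, F f -> wedgeT (ract f a) = ract (wedgeT f) a,
             forall f g, F f -> F g -> wedgeT f = wedgeT g -> f = g &
             forall th, exists f, F f /\ wedgeT f = th])
  (P : T -> T) (HPlin : rlinear P)
  (HPid : forall t, P (P t) = P t)
  (HPim : forall t, wedgeT t = 0 <-> exists s, P s = t)
  (HPker : forall t, P t = 0 <-> F t)
  (H3 : forall w v, bcentral w -> bcentral v ->
          sigma_of P (tens w v) = tens v w)
  (nabla : E -> T) (Hnabla : connection tens d nabla) :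
  bimodule_connection tens d (sigma_of P) nabla <->
  (forall e, bcentral e -> bcentral (nabla e)).
Proof.
split.
- exact: (bimodule_connection_central H1 Htens HPlin H3 Hnabla).
- exact: (central_bimodule_connection H1 Htens HPlin H3 Hnabla).
Qed.
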